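(* Let $(\mathcal V,[\cdot,\cdots,\cdot],S)$ be a generalized metric $n$-Leibniz algebra, let $\mathfrak g=\mathrm{Im}\,D\subset\mathfrak{gl}(\mathcal V)$ with commutator bracket $[\cdot,\cdot]_C$, and let $\omega$ be the bilinear form on $\mathfrak g$ given by $\omega(D(u_1,\dots,u_{n-1}),D(v_1,\dots,v_{n-1}))=S([u_1,\dots,u_{n-1},v_1],v_2,\dots,v_{n-1})$. Then $(\mathfrak g,\mathcal V,\mathrm{Id})$ is a Lie triple data: $(\mathfrak g,[\cdot,\cdot]_C,\omega)$ is a metric Lie algebra and the inclusion $\mathrm{Id}:\mathfrak g\to\mathfrak{gl}(\mathcal V)$ is a faithful generalized orthogonal representation on $(\mathcal V,S)$.
   Context: All vector spaces are finite-dimensional over $\mathbb R$. An $n$-Leibniz algebra is a vector space $\mathcal V$ with an $n$-linear map $[\cdot,\cdots,\cdot]$ satisfying $[u_1,\dots,u_{n-1},[v_1,\dots,v_n]]=\sum_{i=1}^n[v_1,\dots,[u_1,\dots,u_{n-1},v_i],\dots,v_n]$. A symmetric $S\in\mathrm{Sym}^{n-1}(\mathcal V^* )$ is non-degenerate if $S(u,v_1,\dots,v_{n-2})=0$ for all $v_j$ implies $u=0$. A generalized metric $n$-Leibniz algebra is an $n$-Leibniz algebra with a symmetric non-degenerate $S\in\mathrm{Sym}^{n-1}(\mathcal V^* )$ satisfying (a) unitarity: $\sum_{i=1}^{n-1}S(v_1,\dots,[u_1,\dots,u_{n-1},v_i],\dots,v_{n-1})=0$ and (b) symmetry: $S([u_1,\dots,u_{n-1},v_1],v_2,\dots,v_{n-1})=S([v_1,\dots,v_{n-1},u_1],u_2,\dots,u_{n-1})$.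 $D(u_1,\dots,u_{n-1})\in\mathfrak{gl}(\mathcal V)$ is $u_n\mapsto[u_1,\dots,u_{n-1},u_n]$, and $\mathrm{Im}\,D$ is the linear span of these. A metric Lie algebra is a Lie algebra with a symmetric non-degenerate bilinear form $\omega$ with $\omega([x,y],z)=-\omega(y,[x,z])$. A representation $\rho:\mathfrak g\to\mathfrak{gl}(\mathcal V)$ is generalized orthogonal (w.r.t. $S$) if $\sum_{i=1}^{n-1}S(w_1,\dots,\rho(x)w_i,\dots,w_{n-1})=0$ for all $x,w_j$. A Lie triple data $(\mathfrak g,\mathcal V,\rho)$ consists of a metric Lie algebra $(\mathfrak g,[\cdot,\cdot],\omega)$, a vector space $\mathcal V$ with a symmetric non-degenerate $S\in\mathrm{Sym}^{n-1}(\mathcal V^* )$, and a faithful (injective) generalized orthogonal representation $\rho:\mathfrak g\to\mathfrak{gl}(\mathcal V)$. *)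

(* n-Leibniz algebras with n = k.+2 (so n >= 2),
   finite-dimensional vector spaces = vectType over a real field R. *)
From HB Require Import structures.
From mathcomp Require Import all_boot all_order all_algebra all_fingroup.
Set Implicit Arguments. Unset Strict Implicit. Unset Printing Implicit Defensive.
Import Order.TTheory GRing.Theory Num.Theory.
Local Open Scope ring_scope.

Section Defs.
Variables (R : realFieldType) (V : vectType R).

Definition upd (m : nat) (f : 'I_m -> V) (i : 'I_m) (x : V) : 'I_m -> V :=
  fun j => if j == i then x else f j.

Definition snoc (m : nat) (u : 'I_m -> V) (w : V) : 'I_m.+1 -> V :=
  fun j => match unlift ord_max j with Some j' => u j' | None => w end.

Definition tcons (m : nat) (x : V) (w : 'I_m -> V) : 'I_m.+1 -> V :=
  fun j => match unlift ord0 j with Some j' => w j' | None => x end.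

Definition multilinear (m : nat) (T : lmodType R) (F : ('I_m -> V) -> T) :=
  forall (f : 'I_m -> V) (i : 'I_m) (a : R) (x y : V),
    F (upd f i (a *: x + y)) = a *: F (upd f i x) + F (upd f i y).

Definition sym_form (m : nat) (S : ('I_m -> V) -> R) :=
  multilinear (T := R^o) S /\ forall (f : 'I_m -> V) (s : 'S_m), S (f \o s) = S f.

Definition nLeibniz (k : nat) (br : ('I_k.+2 -> V) -> V) :=
  multilinear br /\
  forall (u : 'I_k.+1 -> V) (v : 'I_k.+2 -> V),
    br (snoc u (br v)) = \sum_(i < k.+2) br (upd v i (br (snoc u (v i)))).

Definition nondeg (k : nat) (S : ('I_k.+1 -> V) -> R) :=
  forall x : V, (forall w : 'I_k -> V, S (tcons x w) = 0) -> x = 0.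

Definition gen_metric_nLeibniz (k : nat) (br : ('I_k.+2 -> V) -> V)
    (S : ('I_k.+1 -> V) -> R) :=
  [/\ nLeibniz br, sym_form S, nondeg S,
      (forall u v : 'I_k.+1 -> V,
          \sum_(i < k.+1) S (upd v i (br (snoc u (v i)))) = 0) &
      (forall u v : 'I_k.+1 -> V,
          S (upd v ord0 (br (snoc u (v ord0)))) =
          S (upd u ord0 (br (snoc v (u ord0)))))].

Definition fzero : V -> V := fun _ => 0.
Definition fadd (f g : V -> V) : V -> V := fun w => f w + g w.
Definition fscale (a : R) (f : V -> V) : V -> V := fun w => a *: f w.
Definition comm (f g : V -> V) : V -> V := fun w => f (g w) - g (f w).

Definition Dop (k : nat) (br : ('I_k.+2 -> V) -> V) (u : 'I_k.+1 -> V) : V -> V :=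
  fun w => br (snoc u w).

Inductive ImD (k : nat) (br : ('I_k.+2 -> V) -> V) : (V -> V) -> Prop :=
  | ImD_gen u : ImD br (Dop br u)
  | ImD_zero : ImD br fzero
  | ImD_add f g : ImD br f -> ImD br g -> ImD br (fadd f g)
  | ImD_scale a f : ImD br f -> ImD br (fscale a f).

Definition metric_Lie_subalg (g : (V -> V) -> Prop) (om : (V -> V) -> (V -> V) -> R) :=
  [/\
      g fzero /\ (forall x y, g x -> g y -> g (fadd x y)) /\
        (forall a x, g x -> g (fscale a x)),
      (forall x y, g x -> g y -> g (comm x y)) /\
        (forall x, g x -> comm x x = fzero) /\
        (forall x y z, g x -> g y -> g z ->
           fadd (comm x (comm y z)) (fadd (comm y (comm z x)) (comm z (comm x y)))
           = fzero),
      (forall a x y z, g x -> g y -> g z ->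
          om (fadd (fscale a x) y) z = a * om x z + om y z) /\
        (forall x y, g x -> g y -> om x y = om y x),
      (forall x, g x -> (forall y, g y -> om x y = 0) -> x = fzero) &
      (forall x y z, g x -> g y -> g z ->
          om (comm x y) z = - om y (comm x z))].

Definition gen_orth (k : nat) (g : (V -> V) -> Prop) (rho : (V -> V) -> (V -> V))
    (S : ('I_k.+1 -> V) -> R) :=
  forall x (w : 'I_k.+1 -> V), g x ->
    \sum_(i < k.+1) S (upd w i (rho x (w i))) = 0.

Definition Lie_triple_data (k : nat) (g : (V -> V) -> Prop)
    (om : (V -> V) -> (V -> V) -> R) (S : ('I_k.+1 -> V) -> R)
    (rho : (V -> V) -> (V -> V)) :=
  [/\ metric_Lie_subalg g om,
      sym_form S /\ nondeg S,
      (forall x, g x -> linear (rho x : V -> V)) /\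
        (forall a x y, g x -> g y -> rho (fadd (fscale a x) y) = fadd (fscale a (rho x)) (rho y)) /\
        (forall x y, g x -> g y -> rho (comm x y) = comm (rho x) (rho y)),
      (forall x y, g x -> g y -> rho x = rho y -> x = y) &
      gen_orth g rho S].

End Defs.

From HB Require Import structures.
From mathcomp Require Import all_boot all_order all_algebra all_fingroup.
From Stdlib Require Import FunctionalExtensionality ClassicalEpsilon.
Set Implicit Arguments. Unset Strict Implicit. Unset Printing Implicit Defensive.
Import Order.TTheory GRing.Theory Num.Theory.
Local Open Scope ring_scope.

(* Im D is spanned by the operators D(v), so the form can be defined by
   omega(x, sum_p c_p D(v_p)) = sum_p c_p S(x v_p1, v_p2, ...), and the symmetry
   axiom makes this pairing symmetric on two such representations, hence
   independent of the representation chosen.  The Leibniz identity says that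
   every x in Im D is a derivation of the bracket, so [x, D(v)] is the sum of the
   D(v_1, ..., x v_i, ...), which gives closure under the commutator; unitarity
   says that every x in Im D is skew for S, which turns that same expansion into
   the invariance of omega.  Non-degeneracy is inherited from S through
   omega(x, D(w, w')) = S(x w, w'). *)

Section Tuples.
Variables (R : realFieldType) (V : vectType R).

Lemma upd_same m (f : 'I_m -> V) i x : upd f i x i = x.
Proof. by rewrite /upd eqxx. Qed.

Lemma upd_other m (f : 'I_m -> V) i j x : j != i -> upd f i x j = f j.
Proof. by rewrite /upd => /negbTE ->. Qed.

Lemma upd_upd m (f : 'I_m -> V) i x y : upd (upd f i x) i y = upd f i y.
Proof. by apply: functional_extensionality => j; rewrite /upd; case: (j == i). Qed.

Lemma upd_comm m (f : 'I_m -> V) i j x y : i != j ->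
  upd (upd f i x) j y = upd (upd f j y) i x.
Proof.
move=> ij; apply: functional_extensionality => l; rewrite /upd.
by case: eqP => [->|//]; rewrite eq_sym (negbTE ij).
Qed.

Lemma snoc_max m (u : 'I_m -> V) w : snoc u w ord_max = w.
Proof. by rewrite /snoc unlift_none. Qed.

Lemma widen_ord_lift_max m (i : 'I_m) : widen_ord (leqnSn m) i = lift ord_max i.
Proof. by apply: val_inj => /=; rewrite /bump leqNgt ltn_ord. Qed.

Lemma snoc_widen m (u : 'I_m -> V) w i : snoc u w (widen_ord (leqnSn m) i) = u i.
Proof. by rewrite widen_ord_lift_max /snoc liftK. Qed.

Lemma upd_snoc_max m (u : 'I_m -> V) w y : upd (snoc u w) ord_max y = snoc u y.
Proof.
apply: functional_extensionality => j; rewrite /upd /snoc.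
case: eqP => [->|/eqP ne]; first by rewrite unlift_none.
by case: unliftP ne => // ->; rewrite eqxx.
Qed.

Lemma upd_snoc_widen m (u : 'I_m -> V) w i y :
  upd (snoc u w) (widen_ord (leqnSn m) i) y = snoc (upd u i y) w.
Proof.
apply: functional_extensionality => j; rewrite widen_ord_lift_max /upd /snoc.
case: unliftP => [j' ->|->]; first by rewrite (inj_eq (@lift_inj _ _)).
by rewrite (negbTE (neq_lift _ _)).
Qed.

Lemma tcons0 m x (w : 'I_m -> V) : tcons x w ord0 = x.
Proof. by rewrite /tcons unlift_none. Qed.

Lemma upd_tcons0 m x (w : 'I_m -> V) y : upd (tcons x w) ord0 y = tcons y w.
Proof.
apply: functional_extensionality => j; rewrite /upd /tcons.
case: eqP => [->|/eqP ne]; first by rewrite unlift_none.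
by case: unliftP ne => // ->; rewrite eqxx.
Qed.

End Tuples.

Section Multilinear.
Variables (R : realFieldType) (V : vectType R) (m : nat) (T : lmodType R).
Variable F : ('I_m -> V) -> T.
Hypothesis F_ml : multilinear F.

Lemma multilinear0 f i : F (upd f i 0) = 0.
Proof. by have := F_ml f i (-1) 0 0; rewrite scaler0 addr0 scaleN1r addNr. Qed.

Lemma multilinearD f i x y : F (upd f i (x + y)) = F (upd f i x) + F (upd f i y).
Proof. by have := F_ml f i 1 x y; rewrite !scale1r. Qed.

Lemma multilinearZ f i a x : F (upd f i (a *: x)) = a *: F (upd f i x).
Proof. by have := F_ml f i a x 0; rewrite !addr0 multilinear0 addr0. Qed.

Lemma multilinearB f i x y : F (upd f i (x - y)) = F (upd f i x) - F (upd f i y).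
Proof. by rewrite -[- y]scaleN1r multilinearD multilinearZ scaleN1r. Qed.

Lemma multilinear_sum (I : Type) (r : seq I) (c : I -> R) (G : I -> V) f i :
  F (upd f i (\sum_(p <- r) c p *: G p)) = \sum_(p <- r) c p *: F (upd f i (G p)).
Proof.
elim: r => [|p r IH]; first by rewrite !big_nil multilinear0.
by rewrite !big_cons F_ml IH.
Qed.

End Multilinear.

Section Commutator.
Variables (R : realFieldType) (V : vectType R).
Implicit Types x y z : V -> V.
Local Notation fzero := (@fzero R V).

Lemma linear_funB x : linear x -> {morph x : a b / a - b}.
Proof. by move=> x_lin a b; rewrite addrC -scaleN1r x_lin scaleN1r addrC. Qed.

Lemma linear_fun0 x : linear x -> x 0 = 0.
Proof. by move=> /linear_funB xB; rewrite -(subrr 0) xB !subrr. Qed.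

Lemma comm_fzero_r x : linear x -> comm x fzero = fzero.
Proof.
move=> x_lin; apply: functional_extensionality => w.
by rewrite /comm /fzero linear_fun0 // subrr.
Qed.

Lemma comm_linear_r x a y z : linear x ->
  comm x (fadd (fscale a y) z) = fadd (fscale a (comm x y)) (comm x z).
Proof.
move=> x_lin; apply: functional_extensionality => w.
by rewrite /comm /fadd /fscale x_lin scalerBr addrACA opprD.
Qed.

Lemma comm_jacobi x y z : linear x -> linear y -> linear z ->
  fadd (comm x (comm y z)) (fadd (comm y (comm z x)) (comm z (comm x y))) = fzero.
Proof.
move=> /linear_funB xB /linear_funB yB /linear_funB zB.
apply: functional_extensionality => w; rewrite /fadd /comm /fzero !xB !yB !zB.
rewrite !opprB !addrA !subrK.
set a := x (y (z w)); set b := x (z (y w)); set c := z (y (x w)); set d := y (x (z w)).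
rewrite (addrAC _ (- d) b) (addrAC _ c b) subrK (addrAC _ (- d) (- c)).
by rewrite addrK subrK subrr.
Qed.
End Commutator.

Section LeibnizAlgebra.
Variables (R : realFieldType) (V : vectType R) (k : nat).
Variables (br : ('I_k.+2 -> V) -> V) (S : ('I_k.+1 -> V) -> R).
Hypothesis br_ml : multilinear br.
Local Notation fzero := (@fzero R V).
Implicit Types (x y z : V -> V) (u v : 'I_k.+1 -> V).

Definition derivation x :=
  forall v : 'I_k.+2 -> V, x (br v) = \sum_(i < k.+2) br (upd v i (x (v i))).

Definition Dcomb (r : seq (R * ('I_k.+1 -> V))) : V -> V :=
  fun w => \sum_(p <- r) p.1 *: Dop br p.2 w.

Lemma Dcomb_nil : Dcomb [::] = fzero.
Proof. by apply: functional_extensionality => w; rewrite /Dcomb big_nil. Qed.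

Lemma Dcomb_cons p r : Dcomb (p :: r) = fadd (fscale p.1 (Dop br p.2)) (Dcomb r).
Proof. by apply: functional_extensionality => w; rewrite /Dcomb big_cons. Qed.

Lemma Dcomb_Dop v : Dcomb [:: (1, v)] = Dop br v.
Proof. by apply: functional_extensionality => w; rewrite /Dcomb big_seq1 scale1r. Qed.

Lemma ImD_Dcomb r : ImD br (Dcomb r).
Proof.
elim: r => [|p r IH]; first by rewrite Dcomb_nil; apply: ImD_zero.
by rewrite Dcomb_cons; apply: ImD_add => //; apply/ImD_scale/ImD_gen.
Qed.

Lemma ImD_exists_Dcomb x : ImD br x -> exists r, x = Dcomb r.
Proof.
elim=> [u||x1 x2 _ [r1 ->] _ [r2 ->]|a x1 _ [r ->]].
- by exists [:: (1, u)]; rewrite Dcomb_Dop.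
- by exists [::]; rewrite Dcomb_nil.
- by exists (r1 ++ r2); apply: functional_extensionality => w; rewrite /Dcomb big_cat.
- exists [seq (a * p.1, p.2) | p <- r]; apply: functional_extensionality => w.
  by rewrite /Dcomb /fscale big_map scaler_sumr; apply: eq_bigr => p _; rewrite scalerA.
Qed.

Lemma ImD_span_ind (P : (V -> V) -> Prop) :
  P fzero ->
  (forall a v y, ImD br y -> P y -> P (fadd (fscale a (Dop br v)) y)) ->
  forall x, ImD br x -> P x.
Proof.
move=> P0 PS x /ImD_exists_Dcomb [r ->]; elim: r => [|p r IH].
  by rewrite Dcomb_nil.
by rewrite Dcomb_cons; apply: PS => //; apply: ImD_Dcomb.
Qed.

Lemma Dop_linear u : linear (Dop br u).
Proof. by move=> a x y; rewrite /Dop -(upd_snoc_max u 0) br_ml !upd_snoc_max. Qed.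

Lemma ImD_linear x : ImD br x -> linear x.
Proof.
elim=> [u||x1 x2 _ lin1 _ lin2|b x1 _ lin1] a w1 w2 /=.
- exact: Dop_linear.
- by rewrite /fzero scaler0 addr0.
- by rewrite /fadd lin1 lin2 scalerDr addrACA.
- by rewrite /fscale lin1 scalerDr !scalerA mulrC.
Qed.

Hypothesis br_leibniz : forall u (v : 'I_k.+2 -> V),
  br (snoc u (br v)) = \sum_(i < k.+2) br (upd v i (br (snoc u (v i)))).

Lemma ImD_derivation x : ImD br x -> derivation x.
Proof.
elim=> [u||x1 x2 _ der1 _ der2|a x1 _ der1] v.
- exact: br_leibniz.
- by rewrite /fzero big1 // => i _; rewrite (multilinear0 br_ml).
- rewrite /fadd der1 der2 -big_split; apply: eq_bigr => i _.
  by rewrite (multilinearD br_ml).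
- rewrite /fscale der1 scaler_sumr; apply: eq_bigr => i _.
  by rewrite (multilinearZ br_ml).
Qed.

Lemma comm_derivation_Dop x v : derivation x ->
  comm x (Dop br v) = Dcomb [seq (1, upd v i (x (v i))) | i <- index_enum 'I_k.+1].
Proof.
move=> x_der; apply: functional_extensionality => w.
rewrite /comm /Dop x_der big_ord_recr /= snoc_max upd_snoc_max addrK.
rewrite /Dcomb big_map; apply: eq_bigr => i _.
by rewrite snoc_widen upd_snoc_widen scale1r.
Qed.

Lemma ImD_comm x y : ImD br x -> ImD br y -> ImD br (comm x y).
Proof.
move=> x_ImD; have x_lin := ImD_linear x_ImD; move: y.
apply: (ImD_span_ind (P := fun y => ImD br (comm x y))) => [|a v z _ IH].
  by rewrite comm_fzero_r //; apply: ImD_zero.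
rewrite comm_linear_r // comm_derivation_Dop; last exact: ImD_derivation.
by apply: ImD_add => //; apply/ImD_scale/ImD_Dcomb.
Qed.

Hypothesis S_ml : multilinear (T := R^o) S.

Definition omD x v : R := S (upd v ord0 (x (v ord0))).

Definition omDcomb x (r : seq (R * ('I_k.+1 -> V))) : R :=
  \sum_(p <- r) p.1 * omD x p.2.

(* [om x y] pairs [x] with an arbitrary representation of [y]; the value is
   meaningful only for [x] and [y] in Im D, where [om_Dcomb] shows that the
   choice of representation does not matter. *)
Definition om x y : R := omDcomb x (epsilon (inhabits [::]) (fun r => y = Dcomb r)).

Lemma omD_linear a x y v : omD (fadd (fscale a x) y) v = a * omD x v + omD y v.
Proof. exact: S_ml. Qed.

Lemma om_linear_l a x y z : om (fadd (fscale a x) y) z = a * om x z + om y z.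
Proof.
rewrite /om /omDcomb mulr_sumr -big_split; apply: eq_bigr => p _.
by rewrite omD_linear mulrDr mulrCA.
Qed.

Hypothesis S_symm : forall u v,
  S (upd v ord0 (br (snoc u (v ord0)))) = S (upd u ord0 (br (snoc v (u ord0)))).

Lemma omDcomb_sym r1 r2 : omDcomb (Dcomb r1) r2 = omDcomb (Dcomb r2) r1.
Proof.
rewrite /omDcomb /omD /Dcomb.
under eq_bigr do rewrite (multilinear_sum S_ml) mulr_sumr.
under [RHS]eq_bigr do rewrite (multilinear_sum S_ml) mulr_sumr.
rewrite exchange_big /=; apply: eq_bigr => p _; apply: eq_bigr => q _.
by rewrite /Dop S_symm mulrCA.
Qed.

Lemma om_Dcomb x r : ImD br x -> om x (Dcomb r) = omDcomb x r.
Proof.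
move=> /ImD_exists_Dcomb [r1 ->]; rewrite /om.
set r' := epsilon _ _.
have r_r' : Dcomb r = Dcomb r'.
  by apply: (epsilon_spec (inhabits [::]) (fun r' => Dcomb r = Dcomb r')); exists r.
by rewrite omDcomb_sym -r_r' omDcomb_sym.
Qed.

Lemma om_Dop x v : ImD br x -> om x (Dop br v) = omD x v.
Proof. by move=> xI; rewrite -Dcomb_Dop om_Dcomb // /omDcomb big_seq1 mul1r. Qed.

Lemma om_sym x y : ImD br x -> ImD br y -> om x y = om y x.
Proof.
move=> /ImD_exists_Dcomb [r1 ->] /ImD_exists_Dcomb [r2 ->].
by rewrite !om_Dcomb; [apply: omDcomb_sym | apply: ImD_Dcomb..].
Qed.

Lemma om_linear_r a x y z : ImD br x -> ImD br y -> ImD br z ->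
  om x (fadd (fscale a y) z) = a * om x y + om x z.
Proof.
move=> xI yI zI.
have yzI : ImD br (fadd (fscale a y) z) by apply: ImD_add => //; apply: ImD_scale.
by rewrite (om_sym xI yzI) om_linear_l (om_sym yI xI) (om_sym zI xI).
Qed.

Lemma om_fzero_r x : ImD br x -> om x fzero = 0.
Proof. by move=> xI; rewrite -Dcomb_nil om_Dcomb // /omDcomb big_nil. Qed.

Hypothesis S_nondeg : nondeg S.

Lemma om_nondeg x : ImD br x -> (forall y, ImD br y -> om x y = 0) -> x = fzero.
Proof.
move=> xI x_om0; apply: functional_extensionality => w; apply: S_nondeg => w'.
by have := x_om0 _ (ImD_gen br (tcons w w')); rewrite om_Dop // /omD tcons0 upd_tcons0.
Qed.

Hypothesis S_unit : forall u v,
  \sum_(i < k.+1) S (upd v i (br (snoc u (v i)))) = 0.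

Lemma ImD_gen_orth : gen_orth (ImD br) id S.
Proof.
move=> x w xI; move: x xI.
apply: (ImD_span_ind (P := fun x => \sum_(i < k.+1) S (upd w i (x (w i))) = 0)).
  by rewrite big1 // => i _; apply: (multilinear0 S_ml).
move=> a v y _ IH; rewrite /fadd /fscale.
under eq_bigr do rewrite S_ml.
by rewrite big_split /= -mulr_sumr S_unit IH mulr0 addr0.
Qed.

Lemma omD_comm x y v :
  (forall w : 'I_k.+1 -> V, \sum_(i < k.+1) S (upd w i (x (w i))) = 0) ->
  omD (comm x y) v = - \sum_(i < k.+1) omD y (upd v i (x (v i))).
Proof.
move=> x_orth; have := x_orth (upd v ord0 (y (v ord0))).
rewrite !big_ord_recl /omD /comm (multilinearB S_ml) !upd_same !upd_upd.
set s := \sum_(i < k) _; set s' := \sum_(i < k) _; have -> : s = s'.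
  apply: eq_bigr => i _; have ne := neq_lift ord0 i.
  by rewrite upd_other 1?eq_sym // upd_other // upd_comm.
by move/eqP; rewrite addr_eq0 => /eqP ->; rewrite opprD addrC.
Qed.

Lemma om_invariant_Dop x y v : ImD br x -> ImD br y ->
  om (comm x y) (Dop br v) = - om y (comm x (Dop br v)).
Proof.
move=> xI yI; have x_der := ImD_derivation xI.
rewrite om_Dop; last exact: ImD_comm.
rewrite comm_derivation_Dop // om_Dcomb // /omDcomb big_map.
under eq_bigr do rewrite mul1r.
by apply: omD_comm => w; apply: ImD_gen_orth.
Qed.

Lemma om_invariant x y z : ImD br x -> ImD br y -> ImD br z ->
  om (comm x y) z = - om y (comm x z).
Proof.
move=> xI yI; have x_lin := ImD_linear xI; move: z.
apply: (ImD_span_ind (P := fun z => om (comm x y) z = - om y (comm x z))).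
  by rewrite comm_fzero_r // !om_fzero_r ?oppr0 //; apply: ImD_comm.
move=> a v z zI IH; have vI := ImD_gen br v.
have xyI := ImD_comm xI yI; have xvI := ImD_comm xI vI; have xzI := ImD_comm xI zI.
rewrite comm_linear_r // !om_linear_r // IH om_invariant_Dop //.
by rewrite opprD mulrN.
Qed.

Lemma ImD_metric_Lie_subalg : metric_Lie_subalg (ImD br) om.
Proof.
split.
- by split; [apply: ImD_zero | split=> *; [apply: ImD_add | apply: ImD_scale]].
- split; first by move=> x y; apply: ImD_comm.
  split.
    by move=> x _; apply: functional_extensionality => w; rewrite /comm subrr.
  by move=> x y z xI yI zI; apply: comm_jacobi; apply: ImD_linear.
- by split=> [a x y z _ _ _|x y]; [apply: om_linear_l | apply: om_sym].
- exact: om_nondeg.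
- exact: om_invariant.
Qed.

End LeibnizAlgebra.

Theorem mainTheorem5 (R : realFieldType) (V : vectType R) (k : nat)
    (br : ('I_k.+2 -> V) -> V) (S : ('I_k.+1 -> V) -> R) :
  gen_metric_nLeibniz br S ->
  exists om : (V -> V) -> (V -> V) -> R,
    (forall u v : 'I_k.+1 -> V,
        om (Dop br u) (Dop br v) = S (upd v ord0 (br (snoc u (v ord0))))) /\
    Lie_triple_data (ImD br) om S id.
Proof.
move=> [[br_ml br_leibniz] S_form S_nondeg S_unit S_symm].
have [S_ml _] := S_form.
exists (om br S); split.
  by move=> u v; rewrite om_Dop //; apply: ImD_gen.
split.
- exact: ImD_metric_Lie_subalg.
- by [].
- by split=> [x xI|]; [apply: ImD_linear | split].
- by [].
- exact: ImD_gen_orth.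
Qed.
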